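(* Assume the setting of the previous statement: $(U,V_1)\sim p(u,v_1)$, a measurable real function $f(u,v)$, $c(u)=\mathbf{E}_{v\sim p(v)}[e^{f(u,v)}]<\infty$, Borel sets $B_u\subset(c(u),\infty)$ with $S_{B_u}=\{v: e^{f(u,v)}\in B_u\}$ and $p(S_{B_u})>0$, and $q(\cdot\mid u)$ the law of $V_{2:k}=(V_2,\dots,V_k)$ drawn i.i.d. from $p(v)$ conditioned on $S_{B_u}$. For fixed $(u,v_1)$ define $$Z(v_{2:k})=\log\frac{e^{f(u,v_1)}}{\frac1k\sum_{j=1}^k e^{f(u,v_j)}}.$$ Let $p(v_{2:k})$ denote the law of $V_{2:k}$ drawn i.i.d. from $p(v)$, and let $\tilde q(\cdot\mid u)$ denote $p(v_{2:k})$ conditioned on the complement of the event on which $q$ conditions (i.e. $\tilde q(A)=p(A\mid S_{B_u}^c)$ in the paper's notation), assumed to have positive probability. For a distribution $r$ of the negatives, define $\mathrm{Bias}_r(Z)=\mathcal{I}(U;V_1)-\mathbf{E}_{(u,v_1)\sim p(u,v_1)}\mathbf{E}_{v_{2:k}\sim r}[Z]$ and $\mathrm{Var}_r(Z)=\mathrm{Var}_{v_{2:k}\sim r}[Z]$. Suppose $S_{B_u}$ is chosen so that $\mathrm{Var}_{q(v_{2:k})}[Z]\le\mathrm{Var}_{\tilde q(v_{2:k})}[Z]$. Then $$\mathrm{Bias}_p(Z)\le\mathrm{Bias}_q(Z)\quad\text{and}\quad \mathrm{Var}_p(Z)\ge\mathrm{Var}_q(Z),$$ that is, sampling the negatives $v_{2:k}\sim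 q$ instead of $p$ trades higher bias for lower variance.
   Context: $\mathbf{E}_{p(v_{2:k})}[Z]$ (averaged over $(u,v_1)$) is the NCE estimator and $\mathbf{E}_{q(v_{2:k})}[Z]$ the conditional NCE (CNCE) estimator of the mutual information $\mathcal{I}(U;V_1)$; both are lower bounds on $\mathcal{I}(U;V_1)$ with the CNCE value at most the NCE value. *)

From HB Require Import structures.
From mathcomp Require Import all_boot all_order all_algebra.
From mathcomp Require Import all_classical all_reals all_analysis.
Set Implicit Arguments. Unset Strict Implicit. Unset Printing Implicit Defensive.
Import Order.TTheory GRing.Theory Num.Theory.
Import numFieldNormedType.Exports.
Local Open Scope classical_set_scope.
Local Open Scope ring_scope.

Section proj_mfun.
Context d1 d2 (T1 : measurableType d1) (T2 : measurableType d2).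
Definition proj1_fun (x : T1 * T2) : T1 := x.1.
Definition proj2_fun (x : T1 * T2) : T2 := x.2.
HB.instance Definition _ := isMeasurableFun.Build _ _ _ _ proj1_fun measurable_fst.
HB.instance Definition _ := isMeasurableFun.Build _ _ _ _ proj2_fun measurable_snd.
End proj_mfun.

Section defs.
Context (R : realType) (dU dV : measure_display)
  (U : measurableType dU) (V : measurableType dV)
  (PUV : probability (U * V)%type R).

Local Notation margU := (distribution PUV (@proj1_fun _ _ U V)).
Local Notation margV := (distribution PUV (@proj2_fun _ _ U V)).

(** Mutual information I(U;V1) = KL(P_{UV} || P_U (x) P_V), defined as
    \int log (dP_{UV}/d(P_U (x) P_V)) dP_{UV} when P_{UV} << P_U (x) P_V,
    and +oo otherwise. *)
Definition mutual_info : \bar R :=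
  match pselect (charge_of_finite_measure PUV `<< (product_subprobability (margU : subprobability U R, margV : subprobability V R))) with
  | left _ => (\int[PUV]_x
      (ln (fine (Radon_Nikodym (charge_of_finite_measure PUV)
                   (product_subprobability (margU : subprobability U R, margV : subprobability V R)) x)))%:E)%E
  | right _ => +oo%E
  end.
End defs.

Notation margU PUV := (distribution PUV (@proj1_fun _ _ _ _)).
Notation margV PUV := (distribution PUV (@proj2_fun _ _ _ _)).

Section cond.
Context (R : realType) (dO : measure_display) (O : measurableType dO)
  (P : probability O R).

Definition cexpect (A : set O) (X : O -> R) : \bar R :=
  ((fine (P A))^-1%:E * \int[P]_(w in A) (X w)%:E)%E.

Definition cvar (A : set O) (X : O -> R) : \bar R :=
  cexpect A (fun w => (X w - fine (cexpect A X)) ^+ 2).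

Definition iid_with_law dV (V : measurableType dV) n (X : 'I_n -> O -> V)
    (mu : set V -> \bar R) : Prop :=
  (forall j A, measurable A -> P (X j @^-1` A) = mu A) /\
  (forall A : 'I_n -> set V, (forall j, measurable (A j)) ->
     P [set w | forall j, X j w \in A j] =
     (\prod_(j < n) P (X j @^-1` A j))%E).
End cond.

(** The critic f, negatives V_2..V_k given as Vn 0 .. Vn (n-1), k = n+1. *)
Definition Zstat (R : realType) dU dV dO (U : measurableType dU)
  (V : measurableType dV) (O : measurableType dO) (f : U -> V -> R) n
  (Vn : 'I_n -> O -> V) (u : U) (v1 : V) (w : O) : R :=
  ln (expR (f u v1) /
      ((n.+1%:R)^-1 * (expR (f u v1) + \sum_(j < n) expR (f u (Vn j w))))).

Definition cfun (R : realType) dU dV (U : measurableType dU)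
  (V : measurableType dV) (PUV : probability (U * V)%type R)
  (f : U -> V -> R) (u : U) : \bar R :=
  (\int[margV PUV]_v (expR (f u v))%:E)%E.

Definition S_B (R : realType) dU dV (U : measurableType dU)
  (V : measurableType dV) (f : U -> V -> R) (B : U -> set R) (u : U) : set V :=
  [set v | B u (expR (f u v))].

(** The event on which q conditions: all negatives V_2..V_k lie in S_{B_u}. *)
Definition negs_in (dV dO : measure_display) (V : measurableType dV)
  (O : measurableType dO) n (Vn : 'I_n -> O -> V) (S : set V) : set O :=
  [set w | forall j, S (Vn j w)].

(** Bias_r(Z) = I(U;V1) - E_{(u,v1) ~ p(u,v1)} E_{v_{2:k} ~ r}[Z], where the
    law r of the negatives (given u) is P conditioned on the event A u. *)
Definition Bias (R : realType) dU dV dO (U : measurableType dU)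
  (V : measurableType dV) (O : measurableType dO)
  (PUV : probability (U * V)%type R) (P : probability O R) (A : U -> set O)
  (f : U -> V -> R) n (Vn : 'I_n -> O -> V) : \bar R :=
  (mutual_info PUV - \int[PUV]_x cexpect P (A x.1) (Zstat f Vn x.1 x.2))%E.

From HB Require Import structures.
From mathcomp Require Import all_boot all_order all_algebra.
From mathcomp Require Import all_classical all_reals all_analysis.
From mathcomp Require Import measurable_realfun ring lra.
Set Implicit Arguments. Unset Strict Implicit. Unset Printing Implicit Defensive.
Import Order.TTheory GRing.Theory Num.Theory.
Local Open Scope classical_set_scope.
Local Open Scope ring_scope.

(* Fix (u, v1) and write a = exp f(u,v1), s = sum_j exp f(u,V_j) for the
   negatives and k = n + 1, so that Z = g(a + s) with g(t) = ln (a/(t/k)),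
   a decreasing and convex function of t.  Let c = c(u) = E[exp f(u,V_j)],
   so E_p[s] = n c, and let A be the event that every negative lies in
   S_{B_u}; on A each exp f(u,V_j) exceeds c, so s >= n c.
   - Bias: on A, Z <= g(a + n c), hence E_q[Z] = E[Z | A] <= g(a + n c);
     by convexity (tangent line at a + n c) E_p[Z] >= g(a + n c).  Thus
     E_q[Z] <= E_p[Z] for every (u,v1), and integrating in (u,v1) compares
     the biases (the integrand need not be known to be measurable, so we use
     monotonicity of the integral for arbitrary functions).
   - Variance: by the law of total variance over the partition {A, ~A},
     Var_p = P(A) Var_A + P(~A) Var_~A + P(A) P(~A) (E_A - E_~A)^2, which is
     at least Var_A as soon as Var_A <= Var_~A. *)

(* The integral is monotone for arbitrary (not necessarily measurable)
   pointwise ordered functions: both positive and negative parts compare. *)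
Lemma le_integral_pointwise (R : realType) d (T : measurableType d)
  (mu : {measure set T -> \bar R}) (f g : T -> \bar R) :
  (forall x, (f x <= g x)%E) -> (\int[mu]_x f x <= \int[mu]_x g x)%E.
Proof.
move=> fg; rewrite /integral; apply: leeB; apply: ereal_sup_le.
- move=> _ [h hf <-]; exists h => //= x; apply: (le_trans (hf x)).
  apply: (@funepos_le _ _ setT); last by rewrite in_setE.
  by move=> y _; rewrite /patch; case: ifP.
- move=> _ [h hf <-]; exists h => //= x; apply: (le_trans (hf x)).
  apply: (@funeneg_le _ _ setT); last by rewrite in_setE.
  by move=> y _; rewrite /patch; case: ifP.
Qed.

Lemma ln_le_subr1 (R : realType) (t : R) : 0 < t -> ln t <= t - 1.
Proof.
move=> t0; have := @le_ln1Dx R (t - 1).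
by rewrite addrCA subrr addr0; apply; lra.
Qed.

(* The NCE score of a positive sample of weight a against a total weight t
   of k samples: Zstat is nce_score k a (a + sum of the negative weights). *)
Definition nce_score {R : realType} (k a t : R) : R := ln (a / (k^-1 * t)).

Section nce_score.
Variables (R : realType) (k a : R).
Hypotheses (k_gt0 : 0 < k) (a_gt0 : 0 < a).

Lemma nce_score_shift (y t : R) : 0 < y -> 0 < t ->
  nce_score k a t = nce_score k a y + ln (y / t).
Proof.
move=> y0 t0; rewrite /nce_score -lnM ?posrE; last 2 first.
- by apply: divr_gt0 => //; apply: mulr_gt0; rewrite ?invr_gt0.
- exact: divr_gt0.
by congr ln; field; apply/and3P; split; rewrite gt_eqF.
Qed.

Lemma nce_score_antitone (y t : R) : 0 < y -> y <= t ->
  nce_score k a t <= nce_score k a y.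
Proof.
move=> y0 yt; have t0 := lt_le_trans y0 yt.
rewrite (nce_score_shift y0 t0) gerDl.
by apply: ln_le0; rewrite ler_pdivrMr // mul1r.
Qed.

Lemma nce_score_tangent (y t : R) : 0 < y -> 0 < t ->
  nce_score k a y - (t - y) / y <= nce_score k a t.
Proof.
move=> y0 t0; rewrite (nce_score_shift y0 t0) lerD2l.
rewrite -[y / t]invf_div lnV ?posrE ?divr_gt0 // lerNl opprK.
have -> : (t - y) / y = t / y - 1 by field; rewrite gt_eqF.
by apply: ln_le_subr1; exact: divr_gt0.
Qed.

End nce_score.

(* Law of total variance, in terms of the raw moments a1, a2 (resp. c1, c2)
   of X over an event of probability pA (resp. of its complement): if the
   conditional variance on the event is the smaller one, it is at most the
   total variance a2 + c2 - (a1 + c1)^2. *)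
Lemma total_variance_ge (R : realFieldType) (pA a1 a2 c1 c2 : R) :
  0 < pA -> 0 < 1 - pA ->
  pA^-1 * a2 - (pA^-1 * a1) ^+ 2 <=
    (1 - pA)^-1 * c2 - ((1 - pA)^-1 * c1) ^+ 2 ->
  pA^-1 * a2 - (pA^-1 * a1) ^+ 2 <= a2 + c2 - (a1 + c1) ^+ 2.
Proof.
set pC := 1 - pA => pA0 pC0.
set x := pA^-1 * a1; set y := pC^-1 * c1.
set VA := _ - x ^+ 2; set VC := _ - y ^+ 2 => hV.
have ha1 : a1 = pA * x by rewrite /x; field; rewrite gt_eqF.
have hc1 : c1 = pC * y by rewrite /y; field; rewrite gt_eqF.
have ha2 : a2 = pA * (VA + x ^+ 2) by rewrite /VA /x; field; rewrite gt_eqF.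
have hc2 : c2 = pC * (VC + y ^+ 2) by rewrite /VC /y; field; rewrite gt_eqF.
rewrite ha2 hc2 ha1 hc1 -subr_ge0; clearbody x y VA VC.
have -> : pA * (VA + x ^+ 2) + pC * (VC + y ^+ 2) - (pA * x + pC * y) ^+ 2 - VA
    = pC * (VC - VA) + pA * pC * (x - y) ^+ 2 by rewrite /pC; ring.
apply: addr_ge0; first by apply: mulr_ge0; [exact: ltW | rewrite subr_ge0].
by apply: mulr_ge0; [apply: mulr_ge0; exact: ltW | exact: sqr_ge0].
Qed.

Section conditional_moments.
Variables (R : realType) (dO : measure_display) (O : measurableType dO)
  (P : probability O R).

Lemma integral_fineK (D : set O) (X : O -> R) : measurable D ->
  P.-integrable D (fun w => (X w)%:E) ->
  (\int[P]_(w in D) (X w)%:E = (fine (\int[P]_(w in D) (X w)%:E))%:E)%E.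
Proof. by move=> mD iX; rewrite fineK //; exact: integrable_fin_num. Qed.

Lemma cexpectE (D : set O) (X : O -> R) : measurable D ->
  P.-integrable D (fun w => (X w)%:E) ->
  cexpect P D X = ((fine (P D))^-1 * fine (\int[P]_(w in D) (X w)%:E))%:E.
Proof. by move=> mD iX; rewrite /cexpect (integral_fineK mD iX). Qed.

Lemma cexpect_setT (X : O -> R) :
  cexpect P setT X = (\int[P]_w (X w)%:E)%E.
Proof. by rewrite /cexpect probability_setT invr1 mul1e. Qed.

Lemma cvarE (D : set O) (X : O -> R) : measurable D -> (0 < P D)%E ->
  P.-integrable D (fun w => (X w)%:E) ->
  P.-integrable D (fun w => (X w ^+ 2)%:E) ->
  let p := fine (P D) in
  cvar P D X = (p^-1 * fine (\int[P]_(w in D) (X w ^+ 2)%:E)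
                - (p^-1 * fine (\int[P]_(w in D) (X w)%:E)) ^+ 2)%:E.
Proof.
move=> mD PD0 i1 i2 p.
have p0 : 0 < p by apply: fine_gt0; rewrite PD0 ltey_eq fin_num_measure.
rewrite /cvar (cexpectE mD i1) /= /cexpect -/p.
set d1 := fine _; set d2 := fine _; set m := p^-1 * d1.
have icst : P.-integrable D (fun=> (m ^+ 2)%:E).
  exact: finite_measure_integrable_cst.
have iX : P.-integrable D (fun w => (- (2 * m))%:E * (X w)%:E)%E.
  exact: integrableZl.
transitivity (p^-1%:E * \int[P]_(w in D)
  ((X w ^+ 2)%:E + ((- (2 * m))%:E * (X w)%:E + (m ^+ 2)%:E)))%E.
  congr (_ * _)%E; apply: eq_integral => w _.
  by rewrite -EFinM -!EFinD; congr EFin; ring.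
rewrite integralD //; last exact: integrableD.
rewrite integralD // integral_cst // integralZl //.
rewrite (integral_fineK mD i2) (integral_fineK mD i1) -/d1 -/d2.
rewrite [X in ((m ^+ 2)%:E * X)%E](_ : _ = p%:E); last first.
  by rewrite /p fineK ?fin_num_measure.
rewrite -(EFinM (m ^+ 2)) -!EFinD -EFinM; congr EFin.
by rewrite /m; field; rewrite gt_eqF.
Qed.

Lemma integral_setC_split (A : set O) (g : O -> \bar R) : measurable A ->
  measurable_fun setT g ->
  (\int[P]_w g w = \int[P]_(w in A) g w + \int[P]_(w in ~` A) g w)%E.
Proof.
move=> mA mg; rewrite -(setUv A) integral_setU //.
- exact: measurableC.
- by rewrite setUv.
- by rewrite /disj_set setICr.
Qed.

Lemma cvar_le_total (A : set O) (X : O -> R) : measurable A ->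
  P.-integrable setT (fun w => (X w)%:E) ->
  P.-integrable setT (fun w => (X w ^+ 2)%:E) ->
  (0 < P A)%E -> (0 < P (~` A))%E ->
  (cvar P A X <= cvar P (~` A) X)%E -> (cvar P A X <= cvar P setT X)%E.
Proof.
move=> mA i1 i2 PA0 PC0; have mC := measurableC mA.
have [iA1 iA2] := (integrableS measurableT mA (@subsetT _ _) i1,
                   integrableS measurableT mA (@subsetT _ _) i2).
have [iC1 iC2] := (integrableS measurableT mC (@subsetT _ _) i1,
                   integrableS measurableT mC (@subsetT _ _) i2).
rewrite (cvarE mA PA0 iA1 iA2) (cvarE mC PC0 iC1 iC2).
rewrite (cvarE measurableT _ i1 i2) ?probability_setT ?lte01 //=.
rewrite (integral_setC_split mA (measurable_int _ i1)).
rewrite (integral_setC_split mA (measurable_int _ i2)).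
rewrite (integral_fineK mA iA1) (integral_fineK mA iA2).
rewrite (integral_fineK mC iC1) (integral_fineK mC iC2) /=.
rewrite probability_setC // in PC0 *.
have fA : P A \is a fin_num by exact: fin_num_measure.
have pCE : fine (1 - P A) = 1 - fine (P A) by rewrite fineB.
have pA0 : 0 < fine (P A) by apply: fine_gt0; rewrite PA0 ltey_eq fA.
have pC0 : 0 < fine (1 - P A).
  by apply: fine_gt0; rewrite PC0 ltey_eq fin_numB fA.
rewrite pCE in pC0 *; rewrite invr1 !mul1r !lee_fin.
exact: total_variance_ge.
Qed.

Lemma cexpect_le_bound (A : set O) (X : O -> R) (b : R) : measurable A ->
  (0 < P A)%E -> P.-integrable A (fun w => (X w)%:E) ->
  (forall w, A w -> X w <= b) -> (cexpect P A X <= b%:E)%E.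
Proof.
move=> mA PA0 iX Xb.
have fA : P A \is a fin_num by exact: fin_num_measure.
have pA0 : 0 < fine (P A) by apply: fine_gt0; rewrite PA0 ltey_eq fA.
have : (\int[P]_(w in A) (X w)%:E <= \int[P]_(w in A) b%:E)%E.
  apply: le_integral => //; first exact: finite_measure_integrable_cst.
  by move=> w /[!inE] Aw; rewrite lee_fin Xb.
rewrite integral_cst // [X in (_ * X)%E](_ : _ = (fine (P A))%:E); last by rewrite fineK.
rewrite (integral_fineK mA iX) -EFinM !lee_fin.
by move=> h; rewrite (cexpectE mA iX) lee_fin mulrC ler_pdivrMr.
Qed.

Lemma expect_sum (n : nat) (x : 'I_n -> O -> R) (c : R) :
  (forall j, measurable_fun setT (x j)) -> (forall j w, 0 <= x j w) ->
  (forall j, \int[P]_w (x j w)%:E = c%:E)%E ->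
  P.-integrable setT (fun w => (\sum_(j < n) x j w)%:E) /\
  (\int[P]_w (\sum_(j < n) x j w)%:E = (n%:R * c)%:E)%E.
Proof.
move=> mx x0 Ex.
have mxE j : measurable_fun setT (fun w => (x j w)%:E) by exact/measurable_EFinP.
split.
  under eq_fun do rewrite -sumEFin.
  apply: (integrable_sum measurableT) => j _; apply/integrableP; split => //.
  by under eq_integral do rewrite gee0_abs ?lee_fin //; rewrite Ex ltry.
under eq_integral do rewrite -sumEFin.
rewrite ge0_integral_sum //; last by move=> j w _; rewrite lee_fin.
by under eq_bigr do rewrite Ex; rewrite sumEFin sumr_const card_ord mulr_natl.
Qed.

Section nce_expectations.
Variables (k a m : R) (s : O -> R).
Hypotheses (k_gt0 : 0 < k) (a_gt0 : 0 < a) (m_ge0 : 0 <= m).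
Hypothesis s_ge0 : forall w, 0 <= s w.
Hypothesis int_s : P.-integrable setT (fun w => (s w)%:E).
Hypothesis expect_s : (\int[P]_w (s w)%:E = m%:E)%E.
Hypothesis int_score :
  P.-integrable setT (fun w => (nce_score k a (a + s w))%:E).

Lemma expect_nce_score_ge :
  ((nce_score k a (a + m))%:E <= \int[P]_w (nce_score k a (a + s w))%:E)%E.
Proof.
set y := a + m; have y0 : 0 < y by rewrite /y; exact: ltr_wpDr.
pose L w := ((nce_score k a y + (y - a) / y)%:E + (- y^-1)%:E * (s w)%:E)%E.
have iL : P.-integrable setT L.
  apply: integrableD => //; first exact: finite_measure_integrable_cst.
  exact: integrableZl.
have EL : (\int[P]_w L w = (nce_score k a y)%:E)%E.
  rewrite integralD //; last 2 first.
  - exact: finite_measure_integrable_cst.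
  - exact: integrableZl.
  rewrite integral_cst // integralZl // expect_s.
  rewrite [X in (_ * X + _)%E](_ : _ = 1%E); last exact: probability_setT.
  by rewrite mule1 -EFinM -EFinD /y; congr EFin; field; rewrite gt_eqF.
rewrite -EL; apply: le_integral => // w _.
rewrite /L -EFinM -EFinD lee_fin.
have -> : nce_score k a y + (y - a) / y + - y^-1 * s w =
          nce_score k a y - (a + s w - y) / y by field; rewrite gt_eqF.
by apply: nce_score_tangent => //; apply: ltr_wpDr.
Qed.

Lemma cexpect_nce_score_le (A : set O) : measurable A -> (0 < P A)%E ->
  (forall w, A w -> m <= s w) ->
  (cexpect P A (fun w => nce_score k a (a + s w))
   <= cexpect P setT (fun w => nce_score k a (a + s w)))%E.
Proof.
move=> mA PA0 sA; rewrite cexpect_setT.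
apply: le_trans (expect_nce_score_ge); apply: cexpect_le_bound => //.
- exact: integrableS int_score.
- move=> w Aw; apply: nce_score_antitone => //; first exact: ltr_wpDr.
  by rewrite lerD2l sA.
Qed.

End nce_expectations.
End conditional_moments.

Section sampling_model.
Variables (R : realType) (dU dV dO : measure_display)
  (U : measurableType dU) (V : measurableType dV) (O : measurableType dO)
  (P : probability O R) (n : nat) (Vn : 'I_n -> O -> V).
Hypothesis mVn : forall j, measurable_fun [set: O] (Vn j).

Lemma measurable_S_B (f : U -> V -> R) (B : U -> set R) (u : U) :
  measurable_fun [set: U * V] (fun x => f x.1 x.2) -> measurable (B u) ->
  measurable (S_B f B u).
Proof.
move=> mf mB; have mfu := measurableT_comp mf (pair1_measurable u).
have := measurableT_comp (@measurable_expR R) mfu measurableT mB.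
by rewrite setTI.
Qed.

Lemma measurable_negs_in (S : set V) : measurable S ->
  measurable (negs_in Vn S).
Proof.
move=> mS; have -> : negs_in Vn S = \bigcap_(j in [set: 'I_n]) Vn j @^-1` S.
  by apply/seteqP; split => w h j /=; [move=> _; exact: h | exact: h].
apply: fin_bigcap_measurable => [|j _]; first exact: finite_finset.
by have := mVn j measurableT mS; rewrite setTI.
Qed.

Lemma negs_in_gt0 (mu : set V -> \bar R) (S : set V) :
  iid_with_law P Vn mu -> measurable S -> (0 < mu S)%E ->
  (0 < P (negs_in Vn S))%E.
Proof.
move=> [law indep] mS muS0.
have -> : negs_in Vn S = [set w | forall j, Vn j w \in S].
  apply/seteqP; split => w /= h j; first by rewrite inE; exact: h.
  by move: (h j); rewrite inE.
rewrite (indep (fun=> S)) //; apply: (big_ind (fun x => 0 < x)%E) => //.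
  by move=> x y; exact: mule_gt0.
by move=> j _; rewrite law.
Qed.

Lemma expect_negative (mu : {measure set V -> \bar R}) (h : V -> R)
    (j : 'I_n) :
  iid_with_law P Vn mu -> measurable_fun setT h -> (forall v, 0 <= h v) ->
  (\int[P]_w (h (Vn j w))%:E = \int[mu]_v (h v)%:E)%E.
Proof.
move=> [law _] mh h0.
rewrite (eq_measure_integral (pushforward P (Vn j))); last first.
  by move=> A mA _; exact: esym (law j A mA).
rewrite (ge0_integral_pushforward (mVn j)) //; last by move=> v; rewrite lee_fin.
exact/measurable_EFinP.
Qed.

End sampling_model.

Theorem theorem2 (R : realType) (dU dV dO : measure_display)
  (U : measurableType dU) (V : measurableType dV) (O : measurableType dO)
  (PUV : probability (U * V)%type R)
  (f : U -> V -> R) (mf : measurable_fun [set: U * V] (fun x => f x.1 x.2))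
  (n : nat) (* k = n + 1; the negatives V_2..V_k are Vn 0, ..., Vn (n-1) *)
  (P : probability O R) (Vn : 'I_n -> O -> V)
  (mVn : forall j, measurable_fun [set: O] (Vn j))
  (iid : iid_with_law P Vn (margV PUV))
  (B : U -> set R) (mB : forall u, measurable (B u))
  (hc : forall u, (cfun PUV f u < +oo)%E)
  (hB : forall u, B u `<=` [set x | (cfun PUV f u < x%:E)%E])
  (hS : forall u, (0 < margV PUV (S_B f B u))%E)
  (hSc : forall u, (0 < P (~` negs_in Vn (S_B f B u)))%E)
  (intZ : forall u v1, P.-integrable [set: O] (fun w => (Zstat f Vn u v1 w)%:E))
  (intZ2 : forall u v1,
     P.-integrable [set: O] (fun w => ((Zstat f Vn u v1 w) ^+ 2)%:E))
  (hvar : forall u v1,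
     (cvar P (negs_in Vn (S_B f B u)) (Zstat f Vn u v1)
      <= cvar P (~` negs_in Vn (S_B f B u)) (Zstat f Vn u v1))%E) :
  (Bias PUV P (fun _ => [set: O]) f Vn
     <= Bias PUV P (fun u => negs_in Vn (S_B f B u)) f Vn)%E /\
  (forall u v1,
     (cvar P (negs_in Vn (S_B f B u)) (Zstat f Vn u v1)
      <= cvar P [set: O] (Zstat f Vn u v1))%E).
Proof.
have mS u := measurable_S_B mf (mB u).
have mA u := measurable_negs_in mVn (mS u).
have PA0 u := negs_in_gt0 iid (mS u) (hS u).
split; last by move=> u v1; apply: cvar_le_total; rewrite ?hvar.
rewrite /Bias; apply: leeB => //; apply: le_integral_pointwise => -[u v1] /=.
have mfu : measurable_fun setT (fun v => expR (f u v)).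
  exact: measurableT_comp (measurableT_comp mf (pair1_measurable u)).
have c_fin : cfun PUV f u \is a fin_num.
  by rewrite ge0_fin_numE ?hc //; apply: integral_ge0 => v _; exact: expR_ge0.
have expect_neg j : (\int[P]_w (expR (f u (Vn j w)))%:E
                     = (fine (cfun PUV f u))%:E)%E.
  by rewrite fineK // (expect_negative (h := fun v => expR (f u v)) mVn j iid).
have [int_s expect_s] := expect_sum (fun j => measurableT_comp mfu (mVn j))
  (fun j w => expR_ge0 _) expect_neg.
apply: (cexpect_nce_score_le _ _ _ _ int_s expect_s) => //.
- exact: expR_gt0.
- by rewrite mulr_ge0 ?fine_ge0 // integral_ge0 // => v _; exact: expR_ge0.
- by move=> w; apply: sumr_ge0 => j _; exact: expR_ge0.
- exact: intZ.
- move=> w Aw; rewrite mulr_natl -[in X in X <= _](card_ord n) -sumr_const.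
  apply: ler_sum => j _; apply: ltW; rewrite -lte_fin fineK //.
  exact: hB (Aw j).
Qed.
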